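(* Let $X$ be a nontrivial real Hausdorff locally convex space, let $g\in\Gamma(X)$ be sublinear, and let $x^{\ast}\in\partial g(0)$. Let $L_g:=\{x\in X: g(x)=\langle x,x^{\ast}\rangle,\ g(-x)=-\langle x,x^{\ast}\rangle\}$ (a closed linear subspace independent of the choice of $x^{\ast}\in\partial g(0)$), $\widehat{X}:=X/L_g$ with the quotient topology, and define $\widehat{g}_{x^{\ast}}:\widehat{X}\to\mathbb{R}\cup\{\pm\infty\}$ by $\widehat{g}_{x^{\ast}}(\widehat{x}):=g(x)-\langle x,x^{\ast}\rangle$ (this is well defined). Then $\widehat{g}_{x^{\ast}}$ is a proper lower semicontinuous sublinear function with $\widehat{g}_{x^{\ast}}\ge0$ and $L_{\widehat{g}_{x^{\ast}}}=\{\widehat{0}\}$. Moreover, $x^{\ast}\in\operatorname{qri}\partial g(0)$ if and only if $0\in\operatorname{qi}\partial\widehat{g}_{x^{\ast}}(\widehat{0})$.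
   Context: $X^{\ast}$ is the topological dual of $X$ with the weak$^{\ast}$ topology; similarly $(\widehat{X})^{\ast}$ carries its weak$^{\ast}$ topology, and closures in dual spaces are weak$^{\ast}$ closures. $\Gamma(X)$ is the set of proper lower semicontinuous convex functions. For a proper lsc sublinear $k$ on a locally convex space $V$: $\partial k(0)=\{v^{\ast}\in V^{\ast}: v^{\ast}\le k\}$ and $L_k:=\{v\in V: k(v)=\langle v,u^{\ast}\rangle,\ k(-v)=-\langle v,u^{\ast}\rangle\}$ for any $u^{\ast}\in\partial k(0)$ (independent of this choice). For convex $B\subset V^{\ast}$: $\operatorname{qri}B=\{b\in B:\overline{\mathbb{R}_+(B-b)}\text{ is a linear subspace}\}$ and $\operatorname{qi}B=\{b\in B:\overline{\mathbb{R}_+(B-b)}=V^{\ast}\}$. *)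

From HB Require Import structures.
From mathcomp Require Import all_boot all_order all_algebra.
From mathcomp Require Import all_classical all_reals all_analysis.
Set Implicit Arguments. Unset Strict Implicit. Unset Printing Implicit Defensive.
Import Order.TTheory GRing.Theory Num.Theory.
Import numFieldTopology.Exports.
Local Open Scope classical_set_scope.
Local Open Scope ring_scope.

Section defs.
Context {R : realType}.

Definition is_linear {U W : lmodType R} (f : U -> W) :=
  forall (a : R) (x y : U), f (a *: x + y) = a *: f x + f y.

Definition dual (V : preTopologicalLmodType R) : set (V -> R) :=
  [set f | (forall (a : R) (x y : V), f (a *: x + y) = a * f x + f y)
           /\ continuous f].

(* weak^* closure, inside V^*, of a set S of functionals: f is in it iff
   every basic weak^* neighbourhood of f (finitely many points, radius e)
   meets S *)
Definition wclosure (V : preTopologicalLmodType R) (S : set (V -> R))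
  : set (V -> R) :=
  [set f | @dual V f /\
     forall (s : seq V) (e : R), 0 < e ->
       exists2 h, S h & forall v, v \in s -> `|h v - f v| < e].

Definition cone_at (V : preTopologicalLmodType R) (B : set (V -> R)) (b : V -> R)
  : set (V -> R) :=
  [set f | exists t c, 0 <= t /\ B c /\ f = (fun v => t * (c v - b v))].

Definition dual_subspace (V : preTopologicalLmodType R) (M : set (V -> R)) :=
  M (fun _ => 0) /\
  (forall f h, M f -> M h -> M (fun v => f v + h v)) /\
  (forall (t : R) f, M f -> M (fun v => t * f v)).

Definition qri (V : preTopologicalLmodType R) (B : set (V -> R)) : set (V -> R) :=
  [set b | B b /\ dual_subspace (wclosure (cone_at B b))].

Definition qi (V : preTopologicalLmodType R) (B : set (V -> R)) : set (V -> R) :=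
  [set b | B b /\ wclosure (cone_at B b) = @dual V].

Definition subdiff0 (V : preTopologicalLmodType R) (k : V -> \bar R)
  : set (V -> R) :=
  [set f | @dual V f /\ forall v, ((f v)%:E <= k v)%E].

(* L_k, computed with u in partial k(0) *)
Definition Lsp (V : preTopologicalLmodType R) (k : V -> \bar R) (u : V -> R)
  : set V :=
  [set v | k v = (u v)%:E /\ k (- v) = (- u v)%:E].

Definition proper_fun (V : lmodType R) (k : V -> \bar R) :=
  (forall v, k v != -oo%E) /\ exists v, (k v < +oo)%E.

Definition convex_fun (V : lmodType R) (k : V -> \bar R) :=
  forall (x y : V) (t : R), 0 <= t <= 1 ->
    (k (t *: x + (1 - t) *: y)%R <= t%:E * k x + (1 - t)%:E * k y)%E.

Definition sublinear (V : lmodType R) (k : V -> \bar R) :=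
  (forall (t : R) (x : V), 0 < t -> k (t *: x) = (t%:E * k x)%E) /\
  (forall x y : V, (k (x + y)%R <= k x + k y)%E).

Definition Gamma (V : preTopologicalLmodType R) (k : V -> \bar R) :=
  proper_fun k /\ lower_semicontinuous k /\ convex_fun k.

(* hat g_{x^*} on the quotient Y (with projection pi): evaluated at a
   chosen preimage x of y *)
Definition hatg (X : tvsType R) (Y : lmodType R) (pi : X -> Y)
  (g : X -> \bar R) (xs : X -> R) (y : Y) : \bar R :=
  let x := xget 0 [set x | pi x = y] in (g x - (xs x)%:E)%E.

End defs.

From HB Require Import structures.
From mathcomp Require Import all_boot all_order all_algebra.
From mathcomp Require Import all_classical all_reals all_analysis.
From mathcomp Require Import ring lra.
Import Order.TTheory GRing.Theory Num.Theory.
Import numFieldTopology.Exports.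
Local Open Scope classical_set_scope.
Local Open Scope ring_scope.

(* The tilt h := g - x^* is a nonnegative, lower semicontinuous, sublinear
   function with h(x + l) = h(x) for l in L_g, so it descends to hat g on
   X / L_g.  The key fact is that L_g is exactly the set of points at which
   every c in dg(0) agrees with x^*: if h(z) > 0, pick a < h(z) and a convex
   neighbourhood W of 0 with h > a on z - W; the Minkowski gauge of the convex
   set {h < a} + W, which misses z, dominates by Hahn-Banach a linear
   functional that is continuous, below h / a and at least 1 at z.
   Composition with the projection identifies d(hat g)(0) with dg(0) - x^*,
   and the weak* closure K of the cone R_+(dg(0) - x^* ) lies in the
   annihilator of L_g.  If the cone of d(hat g)(0) is weak* dense, K is the
   whole annihilator, a subspace.  Conversely, if K is a subspace, finite
   interpolation shows that a functional vanishing on the common kernel of K,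
   namely L_g, is weak* approximable from K, which gives the density. *)

Section linear_maps.
Context {R : realType} {U W : lmodType R} {f : U -> W}.
Hypothesis fL : is_linear f.

Lemma is_linear0 : f 0 = 0.
Proof.
have := fL 1 0 0; rewrite !scale1r addr0 => e.
by apply: (@addrI _ (f 0)); rewrite addr0 -e.
Qed.

Lemma is_linearD x y : f (x + y) = f x + f y.
Proof. by have := fL 1 x y; rewrite !scale1r. Qed.

Lemma is_linearZ a x : f (a *: x) = a *: f x.
Proof. by have := fL a x 0; rewrite !addr0 is_linear0 addr0. Qed.

Lemma is_linearN x : f (- x) = - f x.
Proof. by rewrite -scaleN1r is_linearZ scaleN1r. Qed.

Lemma is_linearB x y : f (x - y) = f x - f y.
Proof. by rewrite is_linearD is_linearN. Qed.

End linear_maps.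

Definition linear_form {R : realType} {V : lmodType R} (f : V -> R) :=
  forall (a : R) (x y : V), f (a *: x + y) = a * f x + f y.

Section linear_forms.
Context {R : realType} {V : lmodType R} {f : V -> R}.
Hypothesis fL : linear_form f.

Lemma linear_form0 : f 0 = 0.
Proof. exact: (@is_linear0 R V R^o f fL). Qed.

Lemma linear_formZ a x : f (a *: x) = a * f x.
Proof. exact: (@is_linearZ R V R^o f fL). Qed.

Lemma linear_formD x y : f (x + y) = f x + f y.
Proof. exact: (@is_linearD R V R^o f fL). Qed.

Lemma linear_formN x : f (- x) = - f x.
Proof. exact: (@is_linearN R V R^o f fL). Qed.

Lemma linear_formB x y : f (x - y) = f x - f y.
Proof. exact: (@is_linearB R V R^o f fL). Qed.

End linear_forms.

Section hahn_banach.
Context {R : realType} {V : lmodType R} (p : V -> R).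
Hypothesis pZ : forall (t : R) x, 0 < t -> p (t *: x) = t * p x.
Hypothesis pD : forall x y, p (x + y) <= p x + p y.

Let p0 : p 0 = 0.
Proof. by have := @pZ 2 0 (ltr0Sn R 1); rewrite scaler0; lra. Qed.

Let pN x : - p (- x) <= p x.
Proof. by have := pD x (- x); rewrite subrr p0; lra. Qed.

(* G is the graph of a linear functional on a subspace containing x0. *)
Definition dominated_graph (x0 : V) (G : set (V * R)) :=
  [/\ (forall x a b, G (x, a) -> G (x, b) -> a = b),
      (forall x a y b, G (x, a) -> G (y, b) -> G (x + y, a + b)),
      (forall t x a, G (x, a) -> G (t *: x, t * a)),
      (forall x a, G (x, a) -> a <= p x) & G (x0, p x0)].

Lemma dominated_graph_line x0 :
  dominated_graph x0 [set xa | exists t, xa = (t *: x0, t * p x0)].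
Proof.
split.
- move=> x a b [t [-> ->]] [t' [e ->]].
  have [->//|tt'] := eqVneq t t'.
  have : (t - t') *: x0 = 0 by rewrite scalerBl e subrr.
  move/eqP; rewrite scaler_eq0 subr_eq0 (negbTE tt') /= => /eqP ->.
  by rewrite p0 !mulr0.
- by move=> x a y b [t [-> ->]] [t' [-> ->]]; exists (t + t'); rewrite scalerDl mulrDl.
- by move=> s x a [t [-> ->]]; exists (s * t); rewrite scalerA mulrA.
- move=> x a [t [-> ->]].
  have [t0|t0|->] := ltgtP t 0; last by rewrite scale0r mul0r p0.
  + have := pN (t *: x0); rewrite -scaleNr pZ ?oppr_gt0 //; lra.
  + by rewrite pZ.
- by exists 1; rewrite scale1r mul1r.
Qed.

Lemma dominated_graph_gap {x0 G} z : dominated_graph x0 G -> exists c : R,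
  (forall y b, G (y, b) -> b - p (y - z) <= c) /\
  (forall y b, G (y, b) -> c <= p (y + z) - b).
Proof.
move=> [_ GD GZ Gp Gx0].
have G00 : G (0, 0) by have := GZ 0 _ _ Gx0; rewrite scale0r mul0r.
have gap y b y' b' : G (y, b) -> G (y', b') -> b - p (y - z) <= p (y' + z) - b'.
  move=> Gy Gy'; have := Gp _ _ (GD _ _ _ _ Gy Gy').
  have := pD (y - z) (y' + z); rewrite addrACA addNr addr0; lra.
pose S := [set r | exists y b, G (y, b) /\ r = b - p (y - z)].
have Sne : S !=set0 by exists (0 - p (0 - z)), 0, 0.
have Sub : has_ubound S by exists (p (0 + z) - 0) => r [y [b [Gy ->]]]; exact: gap.
exists (sup S); split.
  by move=> y b Gy; apply: ub_le_sup => //; exists y, b.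
by move=> y' b' Gy'; apply: ge_sup => // r [y [b [Gy ->]]]; exact: gap.
Qed.

Lemma dominated_graph_extend {x0 G z} : dominated_graph x0 G ->
  ~ (exists a, G (z, a)) -> exists G', dominated_graph x0 G' /\ G `<` G'.
Proof.
move=> GG nz; have [c [cge cle]] := dominated_graph_gap z GG.
case: GG => [Gf GD GZ Gp Gx0].
pose G' := [set xa | exists x a t, G (x, a) /\ xa = (x + t *: z, a + t * c)].
exists G'; split; last first.
  split=> [[x a] Gx|]; first by exists x, a, 0; split; rewrite // scale0r mul0r !addr0.
  move=> /(_ (z, c)) zG; apply: nz; exists c; apply: zG.
  exists 0, 0, 1; rewrite scale1r mul1r !add0r; split => //.
  by have := GZ 0 _ _ Gx0; rewrite scale0r mul0r.
split.
- move=> w u v [x [a [t [Gx [-> ->]]]]] [x' [a' [t' [Gx' [e ->]]]]].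
  have [tt|tt] := eqVneq t t'.
    by move: e; rewrite tt => /addIr ex; rewrite ex in Gx; rewrite (Gf _ _ _ Gx Gx').
  exfalso; apply: nz; exists ((t - t')^-1 * (a' - a)).
  have -> : z = (t - t')^-1 *: (x' - x).
    apply: (@scalerI _ _ (t - t')); first by rewrite subr_eq0.
    rewrite scalerA mulfV ?subr_eq0 // scale1r scalerBl.
    by rewrite -[x'](addrK (t' *: z)) -e [RHS]addrC addrA addKr.
  by apply: (GZ); have := GD _ _ _ _ Gx' (GZ (-1) _ _ Gx); rewrite scaleN1r mulN1r.
- move=> w u w' u' [x [a [t [Gx [-> ->]]]]] [x' [a' [t' [Gx' [-> ->]]]]].
  exists (x + x'), (a + a'), (t + t'); split; first exact: GD.
  by congr (_, _); [rewrite scalerDl addrACA | ring].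
- move=> s w u [x [a [t [Gx [-> ->]]]]].
  exists (s *: x), (s * a), (s * t); split; first exact: GZ.
  by rewrite scalerDr scalerA mulrDr mulrA.
- move=> w u [x [a [t [Gx [-> ->]]]]].
  have [t0|t0|->] := ltgtP t 0; last by rewrite scale0r mul0r !addr0; exact: Gp.
  + have := cge _ _ (GZ (- t)^-1 _ _ Gx).
    have -> : (- t)^-1 *: x - z = (- t)^-1 *: (x + t *: z).
      by rewrite scalerDr scalerA invrN mulNr mulVf ?lt_eqF // scaleN1r.
    by rewrite pZ ?invr_gt0 ?oppr_gt0 // -mulrBr ler_pdivrMl ?oppr_gt0 //; lra.
  + have := cle _ _ (GZ t^-1 _ _ Gx).
    have -> : t^-1 *: x + z = t^-1 *: (x + t *: z).
      by rewrite scalerDr scalerA mulVf ?gt_eqF // scale1r.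
    by rewrite pZ ?invr_gt0 // -mulrBr ler_pdivlMl //; lra.
- by exists x0, (p x0), 0; rewrite scale0r mul0r !addr0.
Qed.

Lemma dominated_graph_bigcup {x0 F G0 w0} :
  (forall G w, F G -> G w -> dominated_graph x0 G) ->
  total_on F subset -> F G0 -> G0 w0 ->
  dominated_graph x0 (\bigcup_(G in F) G).
Proof.
move=> FG Ftot FG0 G0w0.
have common G1 G2 w1 w2 : F G1 -> F G2 -> G1 w1 -> G2 w2 ->
    exists2 G, F G & G w1 /\ G w2.
  move=> F1 F2 g1 g2; have [s12|s21] := Ftot _ _ F1 F2.
  - by exists G2 => //; split => //; exact: s12.
  - by exists G1 => //; split => //; exact: s21.
split.
- move=> x a b [G1 F1 g1] [G2 F2 g2].
  have [G FG' [g1' g2']] := common _ _ _ _ F1 F2 g1 g2.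
  by have [Gf _ _ _ _] := FG _ _ FG' g1'; exact: Gf g1' g2'.
- move=> x a y b [G1 F1 g1] [G2 F2 g2].
  have [G FG' [g1' g2']] := common _ _ _ _ F1 F2 g1 g2.
  by exists G => //; have [_ GD _ _ _] := FG _ _ FG' g1'; exact: GD g1' g2'.
- move=> t x a [G1 F1 g1]; exists G1 => //.
  by have [_ _ GZ _ _] := FG _ _ F1 g1; exact: GZ.
- by move=> x a [G1 F1 g1]; have [_ _ _ Gp _] := FG _ _ F1 g1; exact: Gp.
- by exists G0 => //; have [_ _ _ _ Gx0] := FG _ _ FG0 G0w0.
Qed.

Theorem hahn_banach x0 : exists f : V -> R,
  [/\ linear_form f, forall x, f x <= p x & f x0 = p x0].
Proof.
pose P G := G = set0 \/ dominated_graph x0 G.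
have [A [PA Amax]] : exists A, P A /\ forall B, A `<` B -> ~ P B.
  apply: Zorn_bigcup => F FP Ftot.
  have [->|/set0P [w [G FG Gw]]] := eqVneq (\bigcup_(G in F) G) set0; first by left.
  right; apply: (dominated_graph_bigcup _ Ftot FG Gw) => G1 w1 /FP [-> //|//].
have AG : dominated_graph x0 A.
  case: PA => // A0; exfalso; apply: (Amax _ _ (or_intror (dominated_graph_line x0))).
  rewrite A0; split => // /(_ (x0, p x0)); apply => //.
  by exists 1; rewrite scale1r mul1r.
have Atot z : exists a, A (z, a).
  apply: contrapT => nz; have [G' [GG' AG']] := dominated_graph_extend AG nz.
  exact: Amax _ AG' (or_intror GG').
pose f z := xget 0 [set a | A (z, a)].
have Af z : A (z, f z) by exact: (xgetPex 0 (Atot z)).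
have [Af1 AD AZ Ap Ax0] := AG.
exists f; split.
- by move=> a x y; apply: Af1 (Af _) _; apply: AD (Af _); exact: AZ.
- by move=> x; exact: Ap.
- exact: Af1 (Af _) Ax0.
Qed.

End hahn_banach.

Section tvs_neighbourhoods.
Context {R : realType} {X : tvsType R}.

Lemma near0_sub {x0 : X} {U : set X} :
  nbhs x0 U -> \forall v \near (0 : X), U (x0 - v).
Proof.
move=> Ux0; have : nbhs ((fun z : X * X => z.1 - z.2) (x0, 0)) U by rewrite /= subr0.
move=> /(@sub_continuous X (x0, 0)) [[A B] /= [A0 B0] AB].
by apply: filterS B0 => v Bv; apply: (AB (x0, v)); split => //; exact: nbhs_singleton.
Qed.

Lemma near0_opp {W : set X} : nbhs 0 W -> \forall v \near (0 : X), W (- v).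
Proof. by move=> W0; apply: (@opp_continuous X 0); rewrite oppr0. Qed.

Lemma near0_scale (x : X) {W : set X} :
  nbhs 0 W -> \forall t \near (0 : R^o), W (t *: x).
Proof.
move=> W0; have : nbhs ((fun z : R^o * X => z.1 *: z.2) (0, x)) W by rewrite /= scale0r.
move=> /(@scale_continuous R X (0, x)) [[A B] /= [A0 B0] AB].
by apply: filterS A0 => t At; apply: (AB (t, x)); split => //; exact: nbhs_singleton.
Qed.

Lemma near_scale_sub (x : X) (k : R) {N : set X} :
  nbhs 0 N -> \forall y \near x, N (k *: (y - x)).
Proof.
move=> N0; have : nbhs ((fun z : R^o * X => z.1 *: z.2) (k, 0)) N by rewrite /= scaler0.
move=> /(@scale_continuous R X (k, 0)) [[A B] /= [A0 B0] AB].
have : nbhs ((fun z : X * X => z.1 - z.2) (x, x)) [set z | N (k *: z)].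
  rewrite /= subrr; apply: filterS B0 => z Bz; apply: (AB (k, z)).
  by split => //; exact: nbhs_singleton.
move=> /(@sub_continuous X (x, x)) [[C D] /= [C0 D0] CD].
by apply: filterS C0 => y Cy; apply: (CD (y, x)); split => //; exact: nbhs_singleton.
Qed.

Lemma nbhs0_absorbing {W : set X} (x : X) :
  nbhs 0 W -> exists2 t : R, 0 < t <= 1 & W (t *: x).
Proof.
move=> /(near0_scale x) /nbhs_ballP [e /= e0 He].
pose t := Num.min (e / 2) 1.
have t0 : 0 < t by rewrite lt_min divr_gt0 // ltr01.
exists t; first by rewrite t0 ge_min lexx orbT.
apply: He; rewrite /ball /= sub0r normrN gtr0_norm //.
have te : t <= e / 2 by rewrite ge_min lexx.
by apply: le_lt_trans te _; rewrite ltr_pdivrMr // ltr_pMr // ltr1n.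
Qed.

Lemma linear_form_continuous {f : X -> R} {N : set X} : linear_form f ->
  nbhs 0 N -> (forall v, N v -> f v <= 1) -> continuous f.
Proof.
move=> fL N0 fN.
have fN1 : \forall v \near (0 : X), `|f v| <= 1.
  near=> v; rewrite ler_norml fN; last by near: v.
  by rewrite andbT lerNl -linear_formN // fN //; near: v; exact: near0_opp.
move=> x; apply/cvgrPdist_lt => e e0.
have k0 : 0 < 2 / e by rewrite divr_gt0.
apply: filterS (near_scale_sub x (2 / e) fN1) => y.
rewrite linear_formZ // linear_formB // normrM gtr0_norm // distrC.
rewrite -ler_pdivlMl // invf_div => fy.
by apply: le_lt_trans fy _; rewrite mulr1 ltr_pdivrMr // ltr_pMr // ltr1n.
Unshelve. all: by end_near.
Qed.

End tvs_neighbourhoods.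

Definition is_convex {R : realType} {V : lmodType R} (D : set V) :=
  forall (l : R) x y, 0 <= l -> l <= 1 -> D x -> D y -> D (l *: x + (1 - l) *: y).

Definition gauge {R : realType} {V : lmodType R} (D : set V) (x : V) :=
  inf [set s : R | 0 < s /\ D (s^-1 *: x)].

Section gauge.
Context {R : realType} {V : lmodType R} {D : set V}.
Hypothesis D_convex : is_convex D.
Hypothesis D0 : D 0.
Hypothesis D_absorbing : forall x, exists2 t : R, 0 < t & D (t *: x).

Let gauge_set_neq0 x : [set s : R | 0 < s /\ D (s^-1 *: x)] !=set0.
Proof.
have [t t0 Dt] := D_absorbing x.
by exists t^-1; split; [rewrite invr_gt0 | rewrite invrK].
Qed.

Let gauge_set_lb x : has_lbound [set s : R | 0 < s /\ D (s^-1 *: x)].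
Proof. by exists 0 => s [s0 _]; exact: ltW. Qed.

Lemma gauge_le1 x : D x -> gauge D x <= 1.
Proof. by move=> Dx; apply: ge_inf => //; split; rewrite ?invr1 ?scale1r. Qed.

Lemma gauge_ge1 x : ~ D x -> 1 <= gauge D x.
Proof.
move=> Dx; rewrite leNgt; apply/negP => /(inf_lt (gauge_set_neq0 x)) [s [s0 Ds] s1].
apply: Dx; have := D_convex _ _ _ (ltW s0) (ltW s1) Ds D0.
by rewrite scaler0 addr0 scalerA mulfV ?gt_eqF // scale1r.
Qed.

Let gaugeZ_le (t : R) x : 0 < t -> gauge D (t *: x) <= t * gauge D x.
Proof.
move=> t0; rewrite -ler_pdivrMl //; apply: lb_le_inf => // s [s0 Ds].
rewrite ler_pdivrMl //; apply: ge_inf => //; split; first exact: mulr_gt0.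
by rewrite scalerA invfM mulrAC mulVf ?gt_eqF // mul1r.
Qed.

Lemma gaugeZ (t : R) x : 0 < t -> gauge D (t *: x) = t * gauge D x.
Proof.
move=> t0; apply/le_anti; rewrite gaugeZ_le //=.
have := @gaugeZ_le t^-1 (t *: x); rewrite invr_gt0 => /(_ t0).
by rewrite scalerA mulVf ?gt_eqF // scale1r -ler_pdivlMl ?invr_gt0 // invrK.
Qed.

(* If D contains x / s and y / s', it contains their convex combination
   (x + y) / (s + s'). *)
Lemma gaugeD x y : gauge D (x + y) <= gauge D x + gauge D y.
Proof.
rewrite -lerBlDl; apply: lb_le_inf => // s' [s0' Ds'].
rewrite lerBlDl -lerBlDr; apply: lb_le_inf => // s [s0 Ds].
rewrite lerBlDr; apply: ge_inf => //; split; first exact: addr_gt0.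
have ss : 0 < s + s' by exact: addr_gt0.
have := D_convex _ _ _ (ltW (divr_gt0 s0 ss)) _ Ds Ds'.
have -> : 1 - s / (s + s') = s' / (s + s').
  by apply/eqP; rewrite subr_eq -mulrDl addrC mulfV // gt_eqF.
have e1 : s / (s + s') * s^-1 = (s + s')^-1 by rewrite mulrAC mulfV ?gt_eqF // mul1r.
have e2 : s' / (s + s') * s'^-1 = (s + s')^-1 by rewrite mulrAC mulfV ?gt_eqF // mul1r.
rewrite !scalerA e1 e2 -scalerDr; apply.
by rewrite ler_pdivrMr // mul1r lerDl ltW.
Qed.

End gauge.

Lemma nbhs0_convex {R : realType} {X : tvsType R} {N : set X} : nbhs 0 N ->
  exists W : set X, [/\ nbhs 0 W, W `<=` N & is_convex W].
Proof.
move=> N0; have [B Bconvex [Bopen Bbasis]] := @locally_convex R X.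
have [W [BW W0] WN] := Bbasis 0 _ N0.
exists W; split => //; first by apply: open_nbhs_nbhs; split => //; exact: Bopen.
move=> l x y l0 l1 Wx Wy.
have := Bconvex W (mem_set BW) x y (Itv01 l0 l1) (mem_set Wx) (mem_set Wy).
by rewrite inE.
Qed.

Section sublinear_separation.
Context {R : realType} {X : tvsType R} {h : X -> \bar R}.
Hypothesis h_lsc : lower_semicontinuous h.
Hypothesis hZ : forall (t : R) x, 0 < t -> h (t *: x) = (t%:E * h x)%E.
Hypothesis hD : forall x y, (h (x + y)%R <= h x + h y)%E.
Hypothesis h0 : h 0 = 0%E.
Hypothesis h_ge0 : forall x, (0 <= h x)%E.

Lemma sublinear_lt_convex (a l : R) y y' : 0 <= l -> l <= 1 ->
  (h y < a%:E)%E -> (h y' < a%:E)%E -> (h (l *: y + (1 - l) *: y')%R < a%:E)%E.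
Proof.
move=> l0 l1 hy hy'.
have [->|l0'] := eqVneq l 0; first by rewrite scale0r add0r subr0 scale1r.
have [->|l1'] := eqVneq l 1; first by rewrite scale1r subrr scale0r addr0.
have lp : 0 < l by rewrite lt_neqAle eq_sym l0' l0.
have lq : 0 < 1 - l by rewrite subr_gt0 lt_neqAle l1' l1.
apply: le_lt_trans (hD _ _) _; rewrite !hZ //.
move: hy hy' (h_ge0 y) (h_ge0 y').
case: (h y) => [r| |] //; case: (h y') => [r'| |] //.
rewrite -!EFinM -EFinD !lte_fin => ra r'a _ _; nra.
Qed.

Lemma separating_convex_set {x0 : X} {a : R} : 0 < a -> (a%:E < h x0)%E ->
  exists D : set X, [/\ is_convex D, exists2 W, nbhs 0 W & W `<=` D,
    ~ D x0 & forall y, (h y < a%:E)%E -> D y].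
Proof.
move=> a0 ax0; have [U Ux0 hU] := h_lsc _ _ ax0.
have [W [W0 WU Wconvex]] := nbhs0_convex (near0_sub Ux0).
exists [set z | exists y v, (h y < a%:E)%E /\ W v /\ z = y + v]; split.
- move=> l z z' l0 l1 [y [v [hy [Wv ->]]]] [y' [v' [hy' [Wv' ->]]]].
  exists (l *: y + (1 - l) *: y'), (l *: v + (1 - l) *: v').
  split; first exact: sublinear_lt_convex.
  by split; [exact: Wconvex | rewrite !scalerDr addrACA].
- by exists W => // v Wv; exists 0, v; rewrite h0 add0r lte_fin.
- move=> [y [v [hy [Wv e]]]]; have := hU _ (WU _ Wv).
  by rewrite e addrK => /(lt_trans hy); rewrite ltxx.
- move=> y hy; exists y, 0; split => //; rewrite addr0; split => //.
  exact: nbhs_singleton.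
Qed.

(* If a f y > h y, rescaling y into {h < a} pushes f above 1. *)
Lemma le_sublevel_minorant (f : X -> R) (a : R) : linear_form f -> 0 < a ->
  (forall y, (h y < a%:E)%E -> f y <= 1) -> forall y, ((a * f y)%:E <= h y)%E.
Proof.
move=> fL a0 f1 y; case Ey: (h y) => [r| |]; last 2 first.
- exact: leey.
- by have := h_ge0 y; rewrite Ey.
rewrite lee_fin leNgt; apply/negP => ry.
have r0 : 0 <= r by rewrite -lee_fin -Ey.
pose r' := (a * f y + r) / 2.
have r'0 : 0 < r' by rewrite divr_gt0 //; lra.
have t0 : 0 < a / r' by exact: divr_gt0.
have hty : (h ((a / r') *: y) < a%:E)%E.
  by rewrite hZ // Ey -EFinM lte_fin mulrAC ltr_pdivrMr // ltr_pM2l // /r'; lra.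
have := f1 _ hty; rewrite linear_formZ // mulrAC ler_pdivrMr // mul1r.
by rewrite /r'; lra.
Qed.

Theorem sublinear_separation x0 : (0 < h x0)%E -> exists c : X -> R,
  [/\ linear_form c, continuous c, forall x, ((c x)%:E <= h x)%E & 0 < c x0].
Proof.
move=> hx0.
have [a a0 ax0] : exists2 a : R, 0 < a & (a%:E < h x0)%E.
  move: hx0; case: (h x0) => [r| |] // => [r0|_]; last by exists 1 => //; exact: ltry.
  by exists (r / 2); move: r0; rewrite !lte_fin => r0; rewrite ?divr_gt0 //; lra.
have [D [Dconvex [W W0 WD] x0D sublevelD]] := separating_convex_set a0 ax0.
have D0 : D 0 by apply: WD; apply: nbhs_singleton.
have Dabsorbing x : exists2 t : R, 0 < t & D (t *: x).
  by have [t /andP [t0 _] Wt] := nbhs0_absorbing x W0; exists t => //; exact: WD.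
have [f [fL fp fx0]] :=
  @hahn_banach _ _ (gauge D) (gaugeZ Dabsorbing) (gaugeD Dconvex Dabsorbing) x0.
have fle1 z : D z -> f z <= 1 by move=> Dz; apply: le_trans (fp z) (gauge_le1 _ Dz).
exists (fun x => a * f x); split.
- by move=> b x y; rewrite fL; ring.
- move=> x; apply: cvgMl_tmp; apply: linear_form_continuous fL W0 _ x.
  by move=> v Wv; apply: fle1; exact: WD.
- by apply: le_sublevel_minorant fL a0 _ => y /sublevelD /fle1.
- rewrite fx0 mulr_gt0 // (lt_le_trans ltr01) //.
  exact: gauge_ge1 Dconvex D0 Dabsorbing _ x0D.
Qed.

End sublinear_separation.

Lemma homogeneous_lsc0 {R : realType} {X : tvsType R} {g : X -> \bar R} :
  proper_fun g -> lower_semicontinuous g ->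
  (forall (t : R) x, 0 < t -> g (t *: x) = (t%:E * g x)%E) -> g 0 = 0%E.
Proof.
move=> [g_nNy [v0 gv0]] g_lsc gZ.
have g0 : g 0%R = (2%:E * g 0%R)%E by rewrite -gZ ?scaler0 ?ltr0n.
case E0 : (g 0%R) g0 => [r| |] g0; last by have := g_nNy 0%R; rewrite E0.
  by move: g0; rewrite -EFinM => -[] r0; rewrite (_ : r = 0) //; lra.
have [r Ev] : exists r, g v0 = r%:E.
  by move: gv0 (g_nNy v0); case: (g v0) => [r| |] //; exists r.
(* g 0 = +oo, yet g (t *: v0) = t * r stays below |r| + 1 for 0 < t <= 1 *)
have := g_lsc 0%R (`|r| + 1); rewrite E0 => /(_ (ltry _)) [U U0 hU].
have [t /andP [t0 t1] Ut] := nbhs0_absorbing v0 U0.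
have tr : t * r < `|r| + 1.
  by clear -t0 t1; have := ler_norm r; have := normr_ge0 r; nra.
by have := hU _ Ut; rewrite gZ // Ev -EFinM lte_fin => /(lt_trans tr); rewrite ltxx.
Qed.

Section dual_space.
Context {R : realType} {V : preTopologicalLmodType R}.

Lemma dual_linear_form {f : V -> R} : dual f -> linear_form f.
Proof. by case. Qed.

Lemma dual0 : dual (fun _ : V => 0).
Proof. by split => [a x y|x]; [rewrite mulr0 addr0 | exact: cvg_cst]. Qed.

Lemma dualD {f h : V -> R} : dual f -> dual h -> dual (fun v => f v + h v).
Proof.
move=> [fL fc] [hL hc]; split => [a x y|x]; first by rewrite fL hL; ring.
by apply: cvgD; [exact: fc | exact: hc].
Qed.

Lemma dualZ (t : R) {f : V -> R} : dual f -> dual (fun v => t * f v).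
Proof.
move=> [fL fc]; split => [a x y|x]; first by rewrite fL; ring.
by apply: cvgMl_tmp; exact: fc.
Qed.

Lemma dualB {f h : V -> R} : dual f -> dual h -> dual (fun v => f v - h v).
Proof.
move=> fd hd; have := dualD fd (dualZ (-1) hd).
by congr dual; apply/funext => v; rewrite mulN1r.
Qed.

Lemma dual_comp {W : preTopologicalLmodType R} {q : V -> W} {f : W -> R} :
  is_linear q -> continuous q -> dual f -> dual (f \o q).
Proof.
move=> qL qc [fL fc]; split => [a x y|x] /=; first by rewrite qL fL.
by apply: continuous_comp; [exact: qc | exact: fc].
Qed.

End dual_space.

Section cone.
Context {R : realType} {V : preTopologicalLmodType R}.

Lemma subdiff0_dual (k : V -> \bar R) : subdiff0 k `<=` @dual R V.
Proof. by move=> f []. Qed.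

Lemma cone_at_dual {B : set (V -> R)} {b} :
  B `<=` @dual R V -> dual b -> cone_at B b `<=` @dual R V.
Proof.
by move=> Bd bd f [t [c [t0 [Bc ->]]]]; apply: dualZ; exact: dualB (Bd _ Bc) bd.
Qed.

Lemma sub_wclosure (S : set (V -> R)) : S `<=` @dual R V -> S `<=` wclosure S.
Proof.
move=> Sd f Sf; split => [|s e e0]; first exact: Sd.
by exists f => // v _; rewrite subrr normr0.
Qed.

End cone.

Lemma lsc_subr_continuous {R : realType} {T : topologicalType}
    (g : T -> \bar R) (f : T -> R) : lower_semicontinuous g -> continuous f ->
  lower_semicontinuous (fun x => (g x - (f x)%:E)%E).
Proof.
move=> g_lsc fc x a hax.
have [e e0 hx] : exists2 e : R, 0 < e & ((a + f x + e)%:E < g x)%E.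
  move: hax; case: (g x) => [r| |] //= => [|_]; last by exists 1 => //; exact: ltry.
  by rewrite lte_fin => r0; exists ((r - f x - a) / 2); rewrite ?lte_fin; lra.
have [U Ux hU] := g_lsc _ _ hx.
have fx : \forall y \near x, `|f x - f y| < e by move/cvgrPdist_lt: (fc x); apply.
exists (U `&` [set y | `|f x - f y| < e]); first exact: filterI.
move=> y [Uy]; rewrite /= ltr_norml => /andP[f1 f2]; have := hU _ Uy.
case: (g y) => [r| |] //= => [|_]; last by rewrite addye ?ltry.
by rewrite -EFinD !lte_fin => hr; lra.
Qed.

Definition tilt {R : realType} {V : lmodType R} (g : V -> \bar R) (xs : V -> R)
  (x : V) : \bar R := (g x - (xs x)%:E)%E.

Lemma tilt_le {R : realType} {V : lmodType R} (g : V -> \bar R) (xs : V -> R) a x :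
  ((a%:E <= tilt g xs x) = ((a + xs x)%:E <= g x))%E.
Proof. by rewrite /tilt leeBrDr. Qed.

Section tilt.
Context {R : realType} {X : tvsType R} {g : X -> \bar R} {xs : X -> R}.
Hypothesis g_proper : proper_fun g.
Hypothesis g_lsc : lower_semicontinuous g.
Hypothesis g_sub : sublinear g.
Hypothesis xs_sub : subdiff0 g xs.

Let xsL : linear_form xs := dual_linear_form xs_sub.1.

Lemma tilt_ge0 x : (0 <= tilt g xs x)%E.
Proof. by rewrite /tilt suber_ge0 //; exact: xs_sub.2. Qed.

Lemma tilt0 : tilt g xs 0 = 0%E.
Proof.
by rewrite /tilt (homogeneous_lsc0 g_proper g_lsc g_sub.1) linear_form0 // sube0.
Qed.

Lemma tiltZ (t : R) x : 0 < t -> tilt g xs (t *: x) = (t%:E * tilt g xs x)%E.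
Proof.
move=> t0; rewrite /tilt g_sub.1 // linear_formZ // EFinM muleBr //.
exact: fin_num_adde_defl.
Qed.

Lemma tiltD x y : (tilt g xs (x + y) <= tilt g xs x + tilt g xs y)%E.
Proof.
rewrite /tilt linear_formD // EFinD oppeD ?fin_num_adde_defl // addeACA.
exact: leeD (g_sub.2 x y) (lexx _).
Qed.

Lemma tilt_lsc : lower_semicontinuous (tilt g xs).
Proof. exact: lsc_subr_continuous g_lsc xs_sub.1.2. Qed.

Lemma tilt_eq0 x : tilt g xs x = 0%E -> g x = (xs x)%:E.
Proof.
rewrite /tilt; case: (g x) => [r| |] //= [] /eqP.
by rewrite subr_eq0 => /eqP ->.
Qed.

Lemma Lsp_tilt x : Lsp g xs x <-> tilt g xs x = 0%E /\ tilt g xs (- x) = 0%E.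
Proof.
split => [[gx gNx]|[/tilt_eq0 gx /tilt_eq0 gNx]].
  by rewrite /tilt gx gNx linear_formN // !subee.
by split; rewrite // gNx linear_formN.
Qed.

Lemma tilt_addL x {l} : Lsp g xs l -> tilt g xs (x + l) = tilt g xs x.
Proof.
move=> /Lsp_tilt [tl tNl]; apply/le_anti/andP; split.
  by apply: le_trans (tiltD _ _) _; rewrite tl adde0.
by rewrite -{1}(addrK l x); apply: le_trans (tiltD _ _) _; rewrite tNl adde0.
Qed.

Lemma subdiff0_Lsp {c l} : subdiff0 g c -> Lsp g xs l -> c l = xs l.
Proof.
move=> [[cL _] cg] [gl gNl]; have := cg l; have := cg (- l).
by rewrite gl gNl !lee_fin (linear_formN cL); lra.
Qed.

Lemma subdiff0_tilt {c : X -> R} : subdiff0 g c ->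
  dual (fun x => c x - xs x) /\ forall x, ((c x - xs x)%:E <= tilt g xs x)%E.
Proof.
move=> [cd cg]; split => [|x]; first exact: dualB cd xs_sub.1.
by rewrite tilt_le subrK; exact: cg.
Qed.

Lemma tilt_subdiff0 {f : X -> R} : dual f ->
  (forall x, ((f x)%:E <= tilt g xs x)%E) -> subdiff0 g (fun x => f x + xs x).
Proof.
move=> fd ft; split => [|x]; first exact: dualD fd xs_sub.1.
by rewrite -tilt_le; exact: ft.
Qed.

Lemma wclosure_cone_Lsp {f} : wclosure (cone_at (subdiff0 g) xs) f ->
  forall l, Lsp g xs l -> f l = 0.
Proof.
move=> [_ fa] l Ll; have [//|fl0] := eqVneq (f l) 0.
have fl_gt0 : 0 < `|f l| by rewrite normr_gt0.
have [k [t [c [_ [gc ->]]]] kf] := fa [:: l] _ fl_gt0.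
have := kf l (mem_head _ _).
by rewrite (subdiff0_Lsp gc Ll) subrr mulr0 sub0r normrN ltxx.
Qed.

Lemma LspP z : Lsp g xs z <-> forall c, subdiff0 g c -> c z = xs z.
Proof.
split => [Lz c gc|zc]; first exact: subdiff0_Lsp.
have tilt0_of w : (forall c, subdiff0 g c -> c w = xs w) -> tilt g xs w = 0%E.
  move=> wc; apply/eqP; rewrite eq_le tilt_ge0 andbT leNgt; apply/negP => w0.
  have [f [fL fc ft fw]] :=
    sublinear_separation tilt_lsc tiltZ tiltD tilt0 tilt_ge0 w w0.
  have := wc _ (tilt_subdiff0 (conj fL fc) ft); lra.
apply/Lsp_tilt; split; apply: tilt0_of => // c gc.
by rewrite (linear_formN (dual_linear_form gc.1)) zc // linear_formN.
Qed.

Lemma wclosure_cone_kernel z :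
  (forall k, wclosure (cone_at (subdiff0 g) xs) k -> k z = 0) -> Lsp g xs z.
Proof.
move=> zK; apply/LspP => c gc.
have : wclosure (cone_at (subdiff0 g) xs) (fun v => 1 * (c v - xs v)).
  apply: sub_wclosure; first exact: cone_at_dual (subdiff0_dual g) xs_sub.1.
  by exists 1, c; split; [exact: ler01 | split].
by move/zK; rewrite mul1r => /eqP; rewrite subr_eq0 => /eqP.
Qed.

End tilt.

Section interpolation.
Context {R : realType} {V : lmodType R}.

Definition form_subspace (K : set (V -> R)) :=
  [/\ K (fun _ => 0), (forall f h, K f -> K h -> K (fun v => f v + h v)),
      (forall (t : R) f, K f -> K (fun v => t * f v)) &
      forall k, K k -> linear_form k].

Lemma form_subspace_ker {K} x : form_subspace K ->
  form_subspace (fun k => K k /\ k x = 0).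
Proof.
move=> [K0 KD KZ KL]; split => //.
- by move=> f h [Kf fx] [Kh hx]; rewrite fx hx addr0; split => //; exact: KD.
- by move=> t f [Kf fx]; rewrite fx mulr0; split => //; exact: KZ.
- by move=> k [Kk _]; exact: KL.
Qed.

(* Induction on s: a form of K that is nonzero at the new point is used to
   reduce to the subspace of forms of K vanishing there. *)
Lemma form_subspace_interpolation (s : seq V) {K psi} :
  form_subspace K -> linear_form psi ->
  (exists2 k, K k & {in s, forall v, k v = psi v}) \/
  (exists z, (forall k, K k -> k z = 0) /\ psi z <> 0).
Proof.
elim: s K psi => [|x s IH] K psi KS psiL; first by left; exists (fun _ => 0); case: KS.
have [K0 KD KZ KL] := KS.
have [Kx|] := pselect (forall k, K k -> k x = 0).
  have [px|px] := eqVneq (psi x) 0; last by right; exists x; split => //; exact/eqP.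
  case: (IH K psi KS psiL) => [[k Kk kpsi]|]; last by right.
  left; exists k => // v; rewrite in_cons => /orP[/eqP ->|/kpsi //].
  by rewrite px Kx.
move=> /existsNP [k1 /not_implyP [Kk1 /eqP k1x]].
pose e v := (k1 x)^-1 * k1 v.
have Ke : K e by exact: KZ.
have ex : e x = 1 by rewrite /e mulVf.
pose psi' v := psi v - psi x * e v.
have psi'L : linear_form psi'.
  by move=> a u v; rewrite /psi' psiL (KL _ Ke); ring.
case: (IH _ psi' (form_subspace_ker x KS) psi'L) => [[k [Kk kx] kpsi]|[z [zK pz]]].
- left; exists (fun v => k v + psi x * e v); first by apply: KD => //; exact: KZ.
  move=> v; rewrite in_cons => /orP[/eqP ->|/kpsi ->]; last by rewrite /psi' subrK.
  by rewrite kx ex add0r mulr1.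
- right; exists (z - e z *: x); split => [k Kk|].
    have : K (fun v => k v + - k x * e v) /\ k x + - k x * e x = 0.
      by split; [apply: KD => //; exact: KZ | rewrite ex mulr1 subrr].
    move=> /zK; rewrite (linear_formB (KL _ Kk)) (linear_formZ (KL _ Kk)); lra.
  by rewrite (linear_formB psiL) (linear_formZ psiL) mulrC.
Qed.

End interpolation.

Section quotient.
Context {R : realType} {X : tvsType R} {Y : preTopologicalLmodType R}.
Context {q : X -> Y} {g : X -> \bar R} {xs : X -> R}.
Hypothesis g_proper : proper_fun g.
Hypothesis g_lsc : lower_semicontinuous g.
Hypothesis g_sub : sublinear g.
Hypothesis xs_sub : subdiff0 g xs.
Hypothesis q_linear : is_linear q.
Hypothesis q_surj : forall y, exists x, q x = y.
Hypothesis q_ker : forall x, q x = 0 <-> Lsp g xs x.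
Hypothesis q_open : forall U : set Y, open U <-> open (q @^-1` U).

Local Notation gh := (hatg q g xs).
Local Notation coneX := (cone_at (subdiff0 g) xs).
Local Notation coneY := (cone_at (subdiff0 gh) (fun _ => 0)).

Let lift y := xget 0 [set x | q x = y].

Let liftK y : q (lift y) = y.
Proof. exact: (xgetPex 0 (q_surj y)). Qed.

Let Lsp_lift x : Lsp g xs (lift (q x) - x).
Proof. by apply/q_ker; rewrite (is_linearB q_linear) liftK subrr. Qed.

Lemma q_continuous : continuous q.
Proof. by apply/continuousP => A /q_open. Qed.

Lemma hatg_q x : gh (q x) = tilt g xs x.
Proof. by rewrite -(tilt_addL g_sub xs_sub x (Lsp_lift x)) addrCA subrr addr0. Qed.

Lemma dual_factor {f : X -> R} : dual f -> (forall l, Lsp g xs l -> f l = 0) ->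
  exists2 phi : Y -> R, dual phi & forall x, phi (q x) = f x.
Proof.
move=> [fL fc] fLsp.
have f_lift x : f (lift (q x)) = f x.
  by apply/eqP; rewrite -subr_eq0 -(linear_formB fL) fLsp.
exists (f \o lift) => //; split => [a y y'|].
  have [[x <-] [x' <-]] := (q_surj y, q_surj y').
  by rewrite -(is_linearZ q_linear) -(is_linearD q_linear) /= !f_lift fL.
apply/continuousP => A oA; apply/q_open.
have -> : q @^-1` ((f \o lift) @^-1` A) = f @^-1` A.
  by apply/funext => x /=; rewrite f_lift.
by move/continuousP: fc; apply.
Qed.

Lemma subdiff0_hatg_comp {u : Y -> R} :
  subdiff0 gh u -> subdiff0 g (fun x => u (q x) + xs x).
Proof.
move=> [ud ugh]; apply: (tilt_subdiff0 xs_sub).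
  exact: dual_comp q_linear q_continuous ud.
by move=> x; rewrite -hatg_q.
Qed.

Lemma subdiff0_factor {c : X -> R} : subdiff0 g c ->
  exists2 u, subdiff0 gh u & forall x, u (q x) = c x - xs x.
Proof.
move=> gc; have [cd ct] := subdiff0_tilt xs_sub gc.
have cxsL l : Lsp g xs l -> c l - xs l = 0.
  by move=> Ll; rewrite (subdiff0_Lsp gc Ll) subrr.
have [u ud uE] := dual_factor cd cxsL.
exists u => //; split => // y; have [x <-] := q_surj y.
by rewrite uE hatg_q.
Qed.

Lemma hatg_ge0 y : (0 <= gh y)%E.
Proof. by have [x <-] := q_surj y; rewrite hatg_q (tilt_ge0 xs_sub). Qed.

Lemma hatg_proper : proper_fun gh.
Proof.
split=> [y|]; first by rewrite gt_eqF // (lt_le_trans _ (hatg_ge0 y)) ?ltNye.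
have [_ [x gx]] := g_proper; exists (q x); rewrite hatg_q /tilt.
by move: gx; case: (g x) => // r _; exact: ltry.
Qed.

Lemma hatg_lsc : lower_semicontinuous gh.
Proof.
apply/lower_semicontinuousP => a; apply/q_open.
have -> : q @^-1` [set y | (a%:E < gh y)%E] = [set x | (a%:E < tilt g xs x)%E].
  by apply/funext => x /=; rewrite hatg_q.
by have /lower_semicontinuousP := tilt_lsc g_lsc xs_sub; apply.
Qed.

Lemma hatg_sublinear : sublinear gh.
Proof.
split=> [t y t0|y y'].
  have [x <-] := q_surj y.
  by rewrite -(is_linearZ q_linear) !hatg_q (tiltZ g_sub xs_sub).
have [[x <-] [x' <-]] := (q_surj y, q_surj y').
by rewrite -(is_linearD q_linear) !hatg_q (tiltD g_sub xs_sub).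
Qed.

Lemma Lsp_hatg u : subdiff0 gh u -> Lsp gh u = [set 0].
Proof.
move=> [[uL _] ugh]; apply/seteqP; split=> [y [uy uNy]|y ->] /=; last first.
  rewrite /Lsp /= oppr0 (linear_form0 uL) oppr0 -(is_linear0 q_linear).
  by rewrite hatg_q tilt0.
have [x xy] := q_surj y; move: uy uNy; rewrite -xy -(is_linearN q_linear) !hatg_q.
move=> ux uNx; have := tilt_ge0 xs_sub x; have := tilt_ge0 xs_sub (- x).
rewrite ux uNx !lee_fin => ? ?; have u0 : u (q x) = 0 by lra.
by apply/q_ker/(Lsp_tilt xs_sub); rewrite ux uNx u0 oppr0.
Qed.

Lemma cone_factor {f} : coneX f -> exists2 f', coneY f' & forall x, f' (q x) = f x.
Proof.
move=> [t [c [t0 [gc ->]]]]; have [u gu uE] := subdiff0_factor gc.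
by exists (fun y => t * (u y - 0)); [exists t, u | move=> x; rewrite uE subr0].
Qed.

Lemma cone_comp {f'} : coneY f' -> coneX (f' \o q).
Proof.
move=> [t [u [t0 [gu ->]]]]; exists t, (fun x => u (q x) + xs x).
do 2!split=> //; first exact: subdiff0_hatg_comp.
by apply/funext => x /=; rewrite addrK subr0.
Qed.

Lemma wclosure_cone_comp {phi} : wclosure coneY phi -> wclosure coneX (phi \o q).
Proof.
move=> [phid phia]; split; first exact: dual_comp q_linear q_continuous phid.
move=> s e e0; have [f' cf' f'e] := phia (map q s) e e0.
by exists (f' \o q); [exact: cone_comp | move=> v vs; apply: f'e; exact: map_f].
Qed.

Lemma qri_qi : qri (subdiff0 g) xs -> qi (subdiff0 gh) (fun _ => 0).
Proof.
move=> [_ [K0 [KD KZ]]].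
have KS : form_subspace (wclosure coneX).
  by split=> // k [kd _]; exact: dual_linear_form kd.
split; first by split=> [|y]; [exact: dual0 | exact: hatg_ge0].
apply/seteqP; split=> [phi [] //|phi phid]; split=> // s e e0.
have psiL := dual_linear_form (dual_comp q_linear q_continuous phid).
case: (form_subspace_interpolation (map lift s) KS psiL).
  move=> [k [_ ka] kpsi].
  have [f cf fk] := ka (map lift s) e e0; have [f' cf' f'E] := cone_factor cf.
  exists f' => // y ys; have ly : lift y \in map lift s := map_f _ ys.
  by rewrite -[y]liftK f'E; have /= <- := kpsi _ ly; exact: fk.
move=> [z [/(wclosure_cone_kernel g_proper g_lsc g_sub xs_sub) /q_ker qz]].
by case; rewrite /= qz (linear_form0 (dual_linear_form phid)).
Qed.

Lemma qi_wclosure_cone : qi (subdiff0 gh) (fun _ => 0) ->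
  forall f, wclosure coneX f <-> dual f /\ forall l, Lsp g xs l -> f l = 0.
Proof.
move=> [_ wY] f; split=> [wf|[fd fL]].
  by split; [exact: wf.1 | exact: wclosure_cone_Lsp].
have [phi phid phiE] := dual_factor fd fL.
have -> : f = phi \o q by apply/funext => x; rewrite /= phiE.
by apply: wclosure_cone_comp; rewrite wY.
Qed.

Lemma qi_qri : qi (subdiff0 gh) (fun _ => 0) -> qri (subdiff0 g) xs.
Proof.
move=> /qi_wclosure_cone wE; split=> //; split; [|split].
- by apply/wE; split=> [|l _]; first exact: dual0.
- move=> f h /wE [fd fL] /wE [hd hL]; apply/wE; split; first exact: dualD.
  by move=> l Ll; rewrite fL // hL // addr0.
- move=> t f /wE [fd fL]; apply/wE; split; first exact: dualZ.
  by move=> l Ll; rewrite fL // mulr0.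
Qed.

End quotient.

Theorem proposition9 (R : realType) (X : tvsType R)
  (Y : preTopologicalLmodType R) (pi : X -> Y)
  (g : X -> \bar R) (xs : X -> R) :
  hausdorff_space X ->
  (exists x : X, x != 0) ->
  Gamma g -> sublinear g ->
  subdiff0 g xs ->
  (* Y = X / L_g with the quotient topology, pi the canonical projection *)
  is_linear pi ->
  (forall y : Y, exists x : X, pi x = y) ->
  (forall x : X, pi x = 0 <-> Lsp g xs x) ->
  (forall U : set Y, open U <-> open (pi @^-1` U)) ->
  let gh := hatg pi g xs in
  (forall x : X, gh (pi x) = (g x - (xs x)%:E)%E) /\
  proper_fun gh /\ lower_semicontinuous gh /\ sublinear gh /\
  (forall y : Y, (0 <= gh y)%E) /\
  (forall u, subdiff0 gh u -> Lsp gh u = [set 0]) /\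
  (qri (subdiff0 g) xs <-> qi (subdiff0 gh) (fun _ => 0)).
Proof.
move=> _ _ [g_proper [g_lsc _]] g_sub xs_sub pi_linear pi_surj pi_ker pi_open gh.
split; first by apply: hatg_q.
split; first by apply: hatg_proper.
split; first by apply: hatg_lsc.
split; first by apply: hatg_sublinear.
split; first by apply: hatg_ge0.
split; first by apply: Lsp_hatg.
by split; [apply: qri_qi | apply: qi_qri].
Qed.
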